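(* Let $\Gamma\subset\mathbb{C}^*$ be a subgroup with the accumulation property, i.e. either $\Gamma$ contains an element $q$ with $|q|\ne1$, or $\Gamma$ contains a sequence $\gamma_n\to1$ in $\mathbb{C}^*$ with $\gamma_n\ne1$. Let $\widetilde\psi:\mathbb{C}^*\to\mathbb{C}^*$ be holomorphic and $\sigma:\Gamma\to\Gamma$ a group homomorphism with $\widetilde\psi(\gamma z)=\sigma(\gamma)\widetilde\psi(z)$ for all $\gamma\in\Gamma$, $z\in\mathbb{C}^*$. Then there exist $a\in\mathbb{C}^*$ and $n\in\mathbb{Z}$ such that $\widetilde\psi(z)=az^n$ and $\sigma(\gamma)=\gamma^n$ for all $\gamma\in\Gamma$. *)

From Stdlib Require Import Reals ZArith.
From Coquelicot Require Import Coquelicot.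

Definition Czpow (z : C) (n : Z) : C :=
  match n with
  | Z0 => 1%C
  | Zpos p => Cpow z (Pos.to_nat p)
  | Zneg p => Cinv (Cpow z (Pos.to_nat p))
  end.

Definition is_subgroup_Cstar (G : C -> Prop) : Prop :=
  (forall g : C, G g -> g <> 0%C) /\ G 1%C /\
  (forall g h : C, G g -> G h -> G (g * h)%C) /\
  (forall g : C, G g -> G (Cinv g)).

Definition accumulation_property (G : C -> Prop) : Prop :=
  (exists q : C, G q /\ Cmod q <> 1%R) \/
  (exists g : nat -> C, (forall n, G (g n) /\ g n <> 1%C) /\
     filterlim g eventually (locally (1%C : C))).

Definition holomorphic_Cstar (f : C -> C) : Prop :=
  forall z : C, z <> 0%C -> @ex_derive C_AbsRing C_NormedModule f z.

Definition group_hom_on (G : C -> Prop) (s : C -> C) : Prop :=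
  (forall g : C, G g -> G (s g)) /\
  (forall g h : C, G g -> G h -> s (g * h)%C = (s g * s h)%C).

(* Let F w = psi (exp w).  F is entire, and it suffices to show F w = F 0 * exp (c w):
   then the 2 pi i-periodicity of F forces c to be an integer n, so psi z = psi 1 * z ^ n,
   and psi g = sigma g * psi 1 gives sigma g = g ^ n.

   If g_k -> 1 in Gamma with g_k <> 1, then z psi'(z) / psi(z) is the limit of
   (sigma g_k - 1) / (g_k - 1), a constant c independent of z; hence F' = c F.
   If q in Gamma has |q| <> 1, write q = exp L, so Re L <> 0, and pick a real a with
   exp (a Re L) = |sigma q|.  Then |F w * exp (- a w)| is invariant under the translations
   by 2 pi i and by L, which span C over R, so F w * exp (- a w) is bounded and entire,
   hence constant by Liouville's theorem.

   Liouville's theorem is derived from Goursat's lemma for rectangles: for a bounded entire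
   Phi and K u = Phi (w0 + exp u) * exp (- u), the integral of K over x + i [0, 2 pi] does not
   depend on x, tends to 2 pi Phi'(w0) as x -> -oo, and to 0 as x -> +oo. *)

From Stdlib Require Import Reals ZArith Lra Lia Classical ClassicalEpsilon.
From Coquelicot Require Import Coquelicot.

Open Scope R_scope.

Notation is_Cderive := (@is_derive C_AbsRing (AbsRing_NormedModule C_AbsRing)).

Lemma Cmod_le_re_im (z : C) : Cmod z <= Rabs (fst z) + Rabs (snd z).
Proof.
  destruct z as [a b]; unfold Cmod; simpl.
  pose proof (Rabs_pos a); pose proof (Rabs_pos b).
  rewrite <- (sqrt_Rsqr (Rabs a + Rabs b)) by lra.
  apply sqrt_le_1_alt. pose proof (Rsqr_abs a); pose proof (Rsqr_abs b).
  unfold Rsqr in *; nra.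
Qed.

Lemma im_le_Cmod (z : C) : Rabs (snd z) <= Cmod z.
Proof. eapply Rle_trans; [apply Rmax_r | apply Rmax_Cmod]. Qed.

Lemma Cmod_reverse_triangle (a b : C) : Rabs (Cmod a - Cmod b) <= Cmod (a - b).
Proof.
  pose proof (Cmod_triangle (a - b) b) as Ha. pose proof (Cmod_triangle (b - a) a) as Hb.
  replace (a - b + b)%C with a in Ha by ring. replace (b - a + a)%C with b in Hb by ring.
  replace (b - a)%C with (- (a - b))%C in Hb by ring. rewrite Cmod_opp in Hb.
  apply Rabs_le_between; lra.
Qed.

Lemma Cmod_small_eq_0 (z : C) : (forall eps, 0 < eps -> Cmod z <= eps) -> z = RtoC 0.
Proof.
  intros H. apply Cmod_eq_0, Rle_antisym; [| apply Cmod_ge_0].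
  apply Rnot_lt_le. intros Hz. specialize (H (Cmod z / 2) ltac:(lra)). lra.
Qed.

Lemma Ci_neq_0 : Ci <> RtoC 0.
Proof. intros E. injection E. lra. Qed.

Lemma Cmod_line (p v : C) (t s : R) :
  Cmod ((p + RtoC t * v) - (p + RtoC s * v)) = Rabs (t - s) * Cmod v.
Proof. rewrite <- Cmod_R, <- Cmod_mult, RtoC_minus. f_equal. ring. Qed.

Lemma norm_C_R (x : C_R_NormedModule) : norm x = Cmod x.
Proof.
  destruct x as [a b]. unfold norm; simpl. unfold prod_norm, Cmod; simpl.
  unfold norm; simpl. unfold abs; simpl. f_equal.
  rewrite !Rmult_1_r, <- !Rabs_mult, !Rabs_right; try reflexivity; apply Rle_ge, Rle_0_sqr.
Qed.

Lemma scal_C_R (k : R) (x : C_R_NormedModule) : scal k x = (RtoC k * x)%C.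
Proof. apply injective_projections; simpl; unfold scal; simpl; unfold mult; simpl; ring. Qed.

(** * Complex differentiability *)

Lemma is_Cderive_bound (f : C -> C) (z l : C) : is_Cderive f z l ->
  forall eps, 0 < eps -> exists d, 0 < d /\ forall y, Cmod (y - z) < d ->
    Cmod (f y - f z - (y - z) * l) <= eps * Cmod (y - z).
Proof.
  intros [_ Hd] eps Heps.
  destruct (Hd z (fun P H => H) (mkposreal eps Heps)) as [d Hd'].
  exists d. split; [apply cond_pos | exact Hd'].
Qed.

Lemma is_Cderive_of_bound (f : C -> C) (z l : C) :
  (forall eps, 0 < eps -> exists d, 0 < d /\ forall y, Cmod (y - z) < d ->
     Cmod (f y - f z - (y - z) * l) <= eps * Cmod (y - z)) ->
  is_Cderive f z l.
Proof.
  intros H. split; [apply is_linear_scal_l |].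
  intros x Hx.
  apply (@is_filter_lim_locally_unique _ (AbsRing_NormedModule C_AbsRing)) in Hx. subst x.
  intros eps. destruct (H eps (cond_pos eps)) as [d [Hd Hd']].
  exists (mkposreal d Hd). exact Hd'.
Qed.

(* [holomorphic_Cstar] uses [C_NormedModule], which is not convertible to
   [AbsRing_NormedModule C_AbsRing], the structure of Coquelicot's product and chain rules. *)
Lemma is_Cderive_of_C_NormedModule (f : C -> C) (z l : C) :
  @is_derive C_AbsRing C_NormedModule f z l -> is_Cderive f z l.
Proof.
  intros [_ Hd]. apply is_Cderive_of_bound. intros eps Heps.
  destruct (Hd z (fun P H => H) (mkposreal eps Heps)) as [d Hd'].
  exists d. split; [apply cond_pos | exact Hd'].
Qed.

Lemma is_Cderive_const (c z : C) : is_Cderive (fun _ => c) z (RtoC 0).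
Proof. exact (@is_derive_const C_AbsRing (AbsRing_NormedModule C_AbsRing) c z). Qed.

Lemma is_Cderive_id (z : C) : is_Cderive (fun x => x) z (RtoC 1).
Proof. exact (@is_derive_id C_AbsRing z). Qed.

Lemma is_Cderive_plus (f g : C -> C) (z df dg : C) :
  is_Cderive f z df -> is_Cderive g z dg -> is_Cderive (fun x => f x + g x)%C z (df + dg)%C.
Proof. exact (@is_derive_plus C_AbsRing (AbsRing_NormedModule C_AbsRing) f g z df dg). Qed.

Lemma is_Cderive_minus (f g : C -> C) (z df dg : C) :
  is_Cderive f z df -> is_Cderive g z dg -> is_Cderive (fun x => f x - g x)%C z (df - dg)%C.
Proof. exact (@is_derive_minus C_AbsRing (AbsRing_NormedModule C_AbsRing) f g z df dg). Qed.

Lemma is_Cderive_mult (f g : C -> C) (z df dg : C) :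
  is_Cderive f z df -> is_Cderive g z dg ->
  is_Cderive (fun x => f x * g x)%C z (df * g z + f z * dg)%C.
Proof. intros Hf Hg. exact (@is_derive_mult C_AbsRing f g z df dg Hf Hg Cmult_comm). Qed.

Lemma is_Cderive_scal (c : C) (f : C -> C) (z df : C) :
  is_Cderive f z df -> is_Cderive (fun x => c * f x)%C z (c * df)%C.
Proof.
  intros Hf. replace (c * df)%C with (RtoC 0 * f z + c * df)%C by ring.
  exact (is_Cderive_mult _ f z _ df (is_Cderive_const c z) Hf).
Qed.

Lemma is_Cderive_comp (f g : C -> C) (z df dg : C) :
  is_Cderive f (g z) df -> is_Cderive g z dg -> is_Cderive (fun x => f (g x)) z (dg * df)%C.
Proof. exact (@is_derive_comp C_AbsRing (AbsRing_NormedModule C_AbsRing) f g z df dg). Qed.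

Lemma is_Cderive_sub_const (p z : C) : is_Cderive (fun x => x - p)%C z (RtoC 1).
Proof.
  replace (RtoC 1) with (RtoC 1 - RtoC 0)%C by ring.
  apply is_Cderive_minus; [apply is_Cderive_id | apply is_Cderive_const].
Qed.

Lemma is_Cderive_affine (k l p z : C) : is_Cderive (fun x => k + l * (x - p))%C z l.
Proof.
  pose proof (is_Cderive_plus _ _ z _ _ (is_Cderive_const k z)
    (is_Cderive_scal l _ z _ (is_Cderive_sub_const p z))) as D.
  replace (RtoC 0 + l * 1)%C with l in D by ring. exact D.
Qed.

Definition entire (f : C -> C) : Prop := forall z, exists l, is_Cderive f z l.

Definition Ccontinuous (f : C -> C) (z : C) : Prop :=
  forall eps, 0 < eps -> exists d, 0 < d /\ forall y, Cmod (y - z) < d -> Cmod (f y - f z) < eps.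

Lemma is_Cderive_Ccontinuous (f : C -> C) (z l : C) : is_Cderive f z l -> Ccontinuous f z.
Proof.
  intros H eps Heps. destruct (is_Cderive_bound f z l H 1 Rlt_0_1) as [d [Hd Hd']].
  set (L := Cmod l). assert (0 <= L) by apply Cmod_ge_0.
  exists (Rmin d (eps / (L + 2))). split.
  { apply Rmin_pos; [lra | apply Rdiv_lt_0_compat; lra]. }
  intros y Hy. pose proof (Rmin_l d (eps / (L + 2))). pose proof (Rmin_r d (eps / (L + 2))).
  specialize (Hd' y ltac:(lra)).
  replace (f y - f z)%C with ((f y - f z - (y - z) * l) + (y - z) * l)%C by ring.
  eapply Rle_lt_trans; [apply Cmod_triangle |]. rewrite Cmod_mult.
  pose proof (Cmod_ge_0 (y - z)).
  apply Rle_lt_trans with (Cmod (y - z) * (L + 2)); [fold L; nra |].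
  apply Rlt_le_trans with (eps / (L + 2) * (L + 2)); [apply Rmult_lt_compat_r; lra |].
  right; field; lra.
Qed.

Lemma entire_Ccontinuous (f : C -> C) : entire f -> forall z, Ccontinuous f z.
Proof. intros H z. destruct (H z) as [l Hl]. exact (is_Cderive_Ccontinuous f z l Hl). Qed.

Lemma Ccontinuous_scal (c : C) (f : C -> C) (z : C) :
  Ccontinuous f z -> Ccontinuous (fun w => c * f w)%C z.
Proof.
  intros H eps Heps. set (M := Cmod c). assert (0 <= M) by apply Cmod_ge_0.
  destruct (H (eps / (M + 1)) ltac:(apply Rdiv_lt_0_compat; lra)) as [d [Hd Hd']].
  exists d. split; [exact Hd |]. intros y Hy. specialize (Hd' y Hy).
  replace (c * f y - c * f z)%C with (c * (f y - f z))%C by ring. rewrite Cmod_mult. fold M.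
  pose proof (Cmod_ge_0 (f y - f z)).
  apply Rle_lt_trans with ((M + 1) * Cmod (f y - f z)); [nra |].
  apply Rlt_le_trans with ((M + 1) * (eps / (M + 1))); [apply Rmult_lt_compat_l; lra |].
  right; field; lra.
Qed.

Lemma is_derive_on_line (f : C -> C) (p v l : C) (t0 : R) :
  is_Cderive f (p + RtoC t0 * v)%C l ->
  @is_derive R_AbsRing C_R_NormedModule (fun t => f (p + RtoC t * v)%C) t0 (v * l)%C.
Proof.
  intros Hf. pose proof (is_Cderive_bound _ _ _ Hf) as H.
  split; [apply is_linear_scal_l |].
  intros x Hx.
  apply (@is_filter_lim_locally_unique _ (AbsRing_NormedModule R_AbsRing)) in Hx. subst x.
  intros eps. set (V := Cmod v). assert (HV : 0 <= V) by apply Cmod_ge_0.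
  destruct (H (eps / (V + 1)) ltac:(apply Rdiv_lt_0_compat; [apply cond_pos | lra]))
    as [d [Hd Hd']].
  exists (mkposreal (d / (V + 1)) ltac:(apply Rdiv_lt_0_compat; lra)).
  intros t Ht. change (Rabs (t - t0) < d / (V + 1)) in Ht.
  change (norm (minus t t0)) with (Rabs (t - t0)). change (minus t t0) with (t - t0).
  rewrite norm_C_R, scal_C_R.
  pose proof (Cmod_line p v t t0) as Hm. fold V in Hm. pose proof (Rabs_pos (t - t0)).
  assert (Hlt : Cmod ((p + RtoC t * v) - (p + RtoC t0 * v)) < d).
  { rewrite Hm. apply Rle_lt_trans with (Rabs (t - t0) * (V + 1)); [nra |].
    apply Rlt_le_trans with (d / (V + 1) * (V + 1)); [apply Rmult_lt_compat_r; lra |].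
    right; field; lra. }
  specialize (Hd' _ Hlt). rewrite Hm in Hd'.
  change (Cmod (f (p + RtoC t * v)%C - f (p + RtoC t0 * v)%C - RtoC (t - t0) * (v * l))
    <= eps * Rabs (t - t0)).
  replace (f (p + RtoC t * v) - f (p + RtoC t0 * v) - RtoC (t - t0) * (v * l))%C
    with (f (p + RtoC t * v) - f (p + RtoC t0 * v) - (p + RtoC t * v - (p + RtoC t0 * v)) * l)%C
    by (rewrite RtoC_minus; ring).
  eapply Rle_trans; [apply Hd' |].
  apply Rle_trans with (eps * Rabs (t - t0) * (V / (V + 1))); [right; field; lra |].
  rewrite <- (Rmult_1_r (eps * Rabs (t - t0))) at 2.
  apply Rmult_le_compat_l; [pose proof (cond_pos eps); nra |].
  apply Rmult_le_reg_r with (V + 1); [lra |]. unfold Rdiv.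
  rewrite Rmult_assoc, Rinv_l by lra. lra.
Qed.

Lemma is_Cderive_0_const (f : C -> C) :
  (forall z, is_Cderive f z (RtoC 0)) -> forall w, f w = f (RtoC 0).
Proof.
  intros H w.
  assert (Hg : forall t, 0 <= t <= 1 ->
    @is_derive R_AbsRing C_R_NormedModule (fun t => f (RtoC 0 + RtoC t * w)%C) t zero).
  { intros t _. pose proof (is_derive_on_line f (RtoC 0) w (RtoC 0) t (H _)) as Ht.
    rewrite Cmult_0_r in Ht. exact Ht. }
  pose proof (eq_is_derive _ 0 1 Hg Rlt_0_1) as E. simpl in E.
  replace (RtoC 0 + RtoC 1 * w)%C with w in E by ring.
  replace (RtoC 0 + RtoC 0 * w)%C with (RtoC 0) in E by ring. symmetry; exact E.
Qed.

(** * The complex exponential *)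

Definition cexp (w : C) : C := (exp (fst w) * cos (snd w), exp (fst w) * sin (snd w)).

Definition two_pi_i : C := (0, 2 * PI).

Lemma cexp_add (a b : C) : cexp (a + b) = (cexp a * cexp b)%C.
Proof.
  destruct a as [a1 a2], b as [b1 b2]. unfold cexp; apply injective_projections; simpl;
  rewrite exp_plus, ?cos_plus, ?sin_plus; ring.
Qed.

Lemma cexp_0 : cexp (RtoC 0) = RtoC 1.
Proof. unfold cexp; apply injective_projections; simpl; rewrite exp_0, ?cos_0, ?sin_0; ring. Qed.

Lemma cexp_opp_r (w : C) : (cexp w * cexp (- w))%C = RtoC 1.
Proof. rewrite <- cexp_add, <- cexp_0. f_equal. ring. Qed.

Lemma cexp_neq_0 (w : C) : cexp w <> RtoC 0.
Proof.
  intros H. pose proof (cexp_opp_r w) as E. rewrite H, Cmult_0_l in E.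
  injection E. lra.
Qed.

Lemma Cmod_cexp (w : C) : Cmod (cexp w) = exp (fst w).
Proof.
  unfold cexp, Cmod; simpl. pose proof (exp_pos (fst w)).
  replace (exp (fst w) * cos (snd w) * (exp (fst w) * cos (snd w) * 1) +
     exp (fst w) * sin (snd w) * (exp (fst w) * sin (snd w) * 1))
    with (exp (fst w) * exp (fst w) * ((sin (snd w))² + (cos (snd w))²)) by (unfold Rsqr; ring).
  rewrite sin2_cos2, Rmult_1_r. apply sqrt_square. lra.
Qed.

Lemma cexp_periodic (w : C) : cexp (w + two_pi_i) = cexp w.
Proof.
  rewrite cexp_add. unfold cexp at 2, two_pi_i; simpl.
  rewrite exp_0, cos_2PI, sin_2PI, Rmult_1_l, Rmult_0_r. apply Cmult_1_r.
Qed.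

Lemma cexp_opp_periodic (w : C) : cexp (- (w + two_pi_i)) = cexp (- w).
Proof. rewrite <- (cexp_periodic (- (w + two_pi_i))). f_equal. ring. Qed.

Lemma cexp_surj (z : C) : z <> RtoC 0 -> exists w, cexp w = z.
Proof.
  intros Hz. destruct z as [x y]. set (r := Cmod (x, y)).
  assert (Hr : 0 < r) by (apply Cmod_gt_0; exact Hz).
  assert (Hr2 : r * r = x * x + y * y).
  { unfold r, Cmod; simpl. rewrite sqrt_sqrt; [ring | nra]. }
  assert (Hx : -1 <= x / r <= 1).
  { pose proof (re_le_Cmod (x, y)) as Hre. simpl in Hre. fold r in Hre.
    apply Rabs_le_between. unfold Rdiv. rewrite Rabs_mult, Rabs_inv, (Rabs_right r) by lra.
    apply Rmult_le_reg_r with r; [lra |]. rewrite Rmult_assoc, Rinv_l by lra. lra. }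
  assert (Hs : sqrt (1 - (x / r)²) = Rabs y / r).
  { replace (1 - (x / r)²) with ((y / r)²).
    - rewrite sqrt_Rsqr_abs. unfold Rdiv.
      rewrite Rabs_mult, Rabs_inv, (Rabs_right r) by lra. reflexivity.
    - unfold Rsqr. apply Rmult_eq_reg_r with (r * r); [| nra].
      field_simplify; [nra | lra | lra]. }
  destruct (Rle_dec 0 y) as [Hy | Hy].
  - exists (ln r, acos (x / r)). unfold cexp; apply injective_projections; simpl;
      rewrite exp_ln by lra.
    + rewrite cos_acos by lra. field. lra.
    + rewrite sin_acos, Hs, Rabs_right by lra. field. lra.
  - exists (ln r, - acos (x / r)). unfold cexp; apply injective_projections; simpl;
      rewrite exp_ln by lra.
    + rewrite cos_neg, cos_acos by lra. field. lra.
    + rewrite sin_neg, sin_acos, Hs, Rabs_left by lra. field. lra.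
Qed.

Lemma derivable_pt_lim_bound (f : R -> R) (x l : R) : derivable_pt_lim f x l ->
  forall eps, 0 < eps -> exists d, 0 < d /\
    forall h, Rabs h < d -> Rabs (f (x + h) - f x - l * h) <= eps * Rabs h.
Proof.
  intros H eps Heps. destruct (H eps Heps) as [d Hd]. exists d. split; [apply cond_pos |].
  intros h Hh. destruct (Req_dec h 0) as [-> | Hn].
  - rewrite Rplus_0_r, Rabs_R0, Rmult_0_r, Rmult_0_r, Rminus_0_r, Rminus_diag, Rabs_R0.
    apply Rle_refl.
  - specialize (Hd h Hn Hh).
    replace (f (x + h) - f x - l * h) with (((f (x + h) - f x) / h - l) * h) by (field; auto).
    rewrite Rabs_mult. apply Rmult_le_compat_r; [apply Rabs_pos | lra].
Qed.

Lemma Cmod_cexp_remainder_le (a b e N : R) : 0 <= e <= 1 -> N <= 1 / 2 ->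
  Rabs a <= N -> Rabs b <= N ->
  Rabs (exp a - 1 - a) <= e * Rabs a -> Rabs (cos b - 1) <= e * Rabs b ->
  Rabs (sin b - b) <= e * Rabs b ->
  Cmod (cexp (a, b) - RtoC 1 - (a, b)) <= (4 * e + 4 * N) * N.
Proof.
  intros He HN Ha Hb HA HC HS.
  set (A := exp a - 1 - a) in *. set (Cb := cos b - 1) in *. set (Sb := sin b - b) in *.
  eapply Rle_trans; [apply Cmod_le_re_im |]. unfold cexp; simpl.
  replace (exp a * cos b + - (1) + - a) with (A + (1 + a + A) * Cb) by (unfold A, Cb; ring).
  replace (exp a * sin b + - 0 + - b) with ((a + A) * (Sb + b) + Sb) by (unfold A, Sb; ring).
  pose proof (Rabs_pos a). pose proof (Rabs_pos b). pose proof (Rabs_pos Cb).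
  assert (Re_bound : Rabs (A + (1 + a + A) * Cb) <= 3 * e * N).
  { eapply Rle_trans; [apply Rabs_triang |]. rewrite Rabs_mult.
    assert (Rabs (1 + a + A) <= 2).
    { eapply Rle_trans; [apply Rabs_triang |].
      eapply Rle_trans; [apply Rplus_le_compat_r, Rabs_triang |]. rewrite Rabs_R1. nra. }
    pose proof (Rabs_pos (1 + a + A)). nra. }
  assert (Im_bound : Rabs ((a + A) * (Sb + b) + Sb) <= 4 * N * N + e * N).
  { eapply Rle_trans; [apply Rabs_triang |]. rewrite Rabs_mult.
    assert (Rabs (a + A) <= 2 * N) by (eapply Rle_trans; [apply Rabs_triang |]; nra).
    assert (Rabs (Sb + b) <= 2 * N) by (eapply Rle_trans; [apply Rabs_triang |]; nra).
    pose proof (Rabs_pos (a + A)). pose proof (Rabs_pos (Sb + b)). nra. }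
  lra.
Qed.

Lemma is_Cderive_cexp_0 : is_Cderive cexp (RtoC 0) (RtoC 1).
Proof.
  apply is_Cderive_of_bound. intros eps Heps. set (e := Rmin 1 (eps / 8)).
  assert (He : 0 < e <= 1 /\ e <= eps / 8) by (pose proof (Rmin_l 1 (eps / 8));
    pose proof (Rmin_r 1 (eps / 8)); unfold e; split; [split; [apply Rmin_pos |] |]; lra).
  destruct (derivable_pt_lim_bound exp 0 _ (derivable_pt_lim_exp 0) e ltac:(lra))
    as [d1 [Hd1 Hexp]].
  destruct (derivable_pt_lim_bound sin 0 _ (derivable_pt_lim_sin 0) e ltac:(lra))
    as [d2 [Hd2 Hsin]].
  destruct (derivable_pt_lim_bound cos 0 _ (derivable_pt_lim_cos 0) e ltac:(lra))
    as [d3 [Hd3 Hcos]].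
  set (d := Rmin (Rmin d1 d2) (Rmin d3 (Rmin (1 / 2) (eps / 8)))).
  assert (Hd : 0 < d) by (repeat apply Rmin_pos; lra).
  assert (d <= d1 /\ d <= d2 /\ d <= d3 /\ d <= 1 / 2 /\ d <= eps / 8)
    as (Hdd1 & Hdd2 & Hdd3 & Hdd4 & Hdd5).
  { unfold d. pose proof (Rmin_l (Rmin d1 d2) (Rmin d3 (Rmin (1 / 2) (eps / 8)))).
    pose proof (Rmin_r (Rmin d1 d2) (Rmin d3 (Rmin (1 / 2) (eps / 8)))).
    pose proof (Rmin_l d1 d2). pose proof (Rmin_r d1 d2).
    pose proof (Rmin_l d3 (Rmin (1 / 2) (eps / 8))).
    pose proof (Rmin_r d3 (Rmin (1 / 2) (eps / 8))).
    pose proof (Rmin_l (1 / 2) (eps / 8)). pose proof (Rmin_r (1 / 2) (eps / 8)). lra. }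
  exists d. split; [exact Hd |]. intros [a b] Hh.
  rewrite cexp_0. replace ((a, b) - RtoC 0)%C with ((a, b) : C) in *
    by (apply injective_projections; simpl; ring).
  set (N := Cmod (a, b)) in *.
  assert (Ha : Rabs a <= N) by apply (re_le_Cmod (a, b)).
  assert (Hb : Rabs b <= N) by apply (im_le_Cmod (a, b)).
  specialize (Hexp a ltac:(lra)). specialize (Hsin b ltac:(lra)). specialize (Hcos b ltac:(lra)).
  rewrite Rplus_0_l, exp_0, Rmult_1_l in Hexp.
  rewrite Rplus_0_l, sin_0, cos_0, Rmult_1_l, Rminus_0_r in Hsin.
  rewrite Rplus_0_l, sin_0, cos_0, Ropp_0, Rmult_0_l, Rminus_0_r in Hcos.
  replace ((a, b) * RtoC 1)%C with ((a, b) : C) by (apply injective_projections; simpl; ring).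
  eapply Rle_trans; [apply (Cmod_cexp_remainder_le a b e N); lra |].
  apply Rmult_le_compat_r; [apply Cmod_ge_0 | lra].
Qed.

Lemma is_Cderive_cexp (w : C) : is_Cderive cexp w (cexp w).
Proof.
  assert (Hsh : is_Cderive (fun y => cexp w * cexp (y - w))%C w (cexp w * (1 * 1))%C).
  { apply is_Cderive_scal, (is_Cderive_comp cexp (fun y => y - w)%C).
    - replace (w - w)%C with (RtoC 0) by ring. exact is_Cderive_cexp_0.
    - apply is_Cderive_sub_const. }
  rewrite Cmult_1_r, Cmult_1_r in Hsh.
  eapply is_derive_ext; [| exact Hsh]. intros y; simpl.
  rewrite <- cexp_add. f_equal. ring.
Qed.

Lemma cexp_nat (n : nat) (w : C) : cexp (RtoC (INR n) * w) = Cpow (cexp w) n.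
Proof.
  induction n as [| n IH].
  - simpl. rewrite <- cexp_0. f_equal. ring.
  - rewrite S_INR, RtoC_plus, Cmult_plus_distr_r, Cmult_1_l, cexp_add, IH. simpl. ring.
Qed.

Lemma cexp_Z (k : Z) (w : C) : cexp (RtoC (IZR k) * w) = Czpow (cexp w) k.
Proof.
  destruct k as [| p | p]; simpl.
  - rewrite <- cexp_0. f_equal. ring.
  - rewrite <- cexp_nat, INR_IPR. reflexivity.
  - rewrite <- cexp_nat, INR_IPR. change (IZR (Z.neg p)) with (- IPR p).
    set (X := (RtoC (IPR p) * w)%C).
    replace (RtoC (- IPR p) * w)%C with (- X)%C by (unfold X; rewrite RtoC_opp; ring).
    rewrite <- (Cmult_1_l (/ cexp X)), <- (cexp_opp_r X). field. apply cexp_neq_0.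
Qed.

Lemma cexp_eq_1_int (c : C) : cexp (c * two_pi_i) = RtoC 1 -> exists k : Z, c = RtoC (IZR k).
Proof.
  destruct c as [cr ci]. unfold cexp, two_pi_i. simpl. intros H.
  injection H as Hre Him.
  set (u := cr * 0 - ci * (2 * PI)) in *. set (th := cr * (2 * PI) + ci * 0) in *.
  pose proof (exp_pos u).
  assert (Hs : sin th = 0) by (apply Rmult_eq_reg_l with (exp u); lra).
  assert (Hc : cos th = 1).
  { pose proof (sin2_cos2 th) as E. rewrite Hs in E. unfold Rsqr in E.
    assert (0 < cos th) by (apply Rmult_lt_reg_l with (exp u); lra). nra. }
  assert (Hu : exp u = exp 0) by (rewrite exp_0; rewrite Hc in Hre; lra).
  apply exp_inv in Hu. pose proof PI_RGT_0.
  assert (Hci : ci = 0) by (unfold u in Hu; nra).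
  assert (Hs2 : sin (th / 2) = 0).
  { pose proof (cos_2a_sin (th / 2)) as E. replace (2 * (th / 2)) with th in E by field. nra. }
  apply sin_eq_0_0 in Hs2. destruct Hs2 as [k Hk]. exists k.
  apply injective_projections; simpl; [| exact Hci].
  unfold th in Hk. rewrite Hci in Hk. apply Rmult_eq_reg_r with PI; lra.
Qed.

(** * Nested rectangles *)

Lemma nested_intervals (u r : nat -> R) :
  (forall n, u n <= u (S n)) -> (forall n, u (S n) + r (S n) <= u n + r n) ->
  (forall n, 0 <= r n) -> exists x, forall n, u n <= x <= u n + r n.
Proof.
  intros Hu Hr Hr0.
  assert (Hmono : forall n m, (n <= m)%nat -> u n <= u m /\ u m + r m <= u n + r n).
  { intros n m Hnm. induction Hnm as [| m _ IH]; [lra |].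
    specialize (Hu m). specialize (Hr m). lra. }
  assert (Hub : forall n m, u m <= u n + r n).
  { intros n m. destruct (le_ge_dec n m) as [Hnm | Hmn].
    - destruct (Hmono n m Hnm). specialize (Hr0 m). lra.
    - destruct (Hmono m n Hmn). specialize (Hr0 n). lra. }
  assert (Hbound : bound (fun x => exists n, x = u n)).
  { exists (u O + r O). intros x [n ->]. apply Hub. }
  destruct (completeness _ Hbound (ex_intro _ (u O) (ex_intro _ O eq_refl))) as [x [Hx1 Hx2]].
  exists x. intros n. split.
  - apply Hx1. exists n. reflexivity.
  - apply Hx2. intros y [m ->]. apply Hub.
Qed.

Lemma dyadic_nested_intervals (L : R) (u : nat -> R) : 0 <= L ->
  (forall n, u (S n) = u n \/ u (S n) = u n + L / 2 ^ S n) ->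
  exists x, forall n, u n <= x <= u n + L / 2 ^ n.
Proof.
  intros HL Hu.
  assert (Half : forall n, L / 2 ^ n = L / 2 ^ S n + L / 2 ^ S n /\ 0 <= L / 2 ^ n).
  { intros n. pose proof (pow_lt 2 n ltac:(lra)). simpl. split.
    - field. lra.
    - apply Rmult_le_pos; [lra | apply Rlt_le, Rinv_0_lt_compat; lra]. }
  apply nested_intervals; intros n; [| | apply Half];
    destruct (Half n); destruct (Half (S n)); destruct (Hu n); lra.
Qed.

Section NestedRectangles.

Variables (W H : R) (P : nat -> R -> R -> Prop).
Hypotheses (HW : 0 <= W) (HH : 0 <= H).

Definition quarter_of (n : nat) (ab ab' : R * R) : Prop :=
  P (S n) (fst ab') (snd ab') /\
  (fst ab' = fst ab \/ fst ab' = fst ab + W / 2 ^ S n) /\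
  (snd ab' = snd ab \/ snd ab' = snd ab + H / 2 ^ S n).

Hypothesis quarter : forall n a b, P n a b -> exists ab', quarter_of n (a, b) ab'.

Variables (a0 b0 : R).
Hypothesis P0 : P O a0 b0.

Fixpoint corner (n : nat) : R * R :=
  match n with
  | O => (a0, b0)
  | S m => epsilon (inhabits (a0, b0)) (quarter_of m (corner m))
  end.

Lemma corner_spec (n : nat) :
  P n (fst (corner n)) (snd (corner n)) /\ quarter_of n (corner n) (corner (S n)).
Proof.
  assert (Hstep : forall m, P m (fst (corner m)) (snd (corner m)) ->
    quarter_of m (corner m) (corner (S m))).
  { intros m Hm. apply (epsilon_spec (inhabits (a0, b0)) (quarter_of m (corner m))).
    destruct (corner m). exact (quarter m _ _ Hm). }
  induction n as [| n [IH Hq]].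
  - split; [exact P0 | exact (Hstep O P0)].
  - split; [exact (proj1 Hq) | exact (Hstep (S n) (proj1 Hq))].
Qed.

Lemma nested_rectangles_limit : exists px py, forall n, exists a b, P n a b /\
  a <= px <= a + W / 2 ^ n /\ b <= py <= b + H / 2 ^ n.
Proof.
  destruct (dyadic_nested_intervals W (fun n => fst (corner n)) HW) as [px Hpx];
    [intros n; apply corner_spec |].
  destruct (dyadic_nested_intervals H (fun n => snd (corner n)) HH) as [py Hpy];
    [intros n; apply corner_spec |].
  exists px, py. intros n. exists (fst (corner n)), (snd (corner n)).
  split; [apply corner_spec | split; [apply Hpx | apply Hpy]].
Qed.

End NestedRectangles.

Lemma exists_div_pow2_lt (c d : R) : 0 < d -> exists n, c / 2 ^ n < d.
Proof.
  intros Hd. pose proof (Rabs_pos c).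
  destruct (pow_lt_1_zero (/ 2) ltac:(rewrite Rabs_right; lra) (d / (Rabs c + 1))
    ltac:(apply Rdiv_lt_0_compat; lra)) as [N HN].
  exists N. specialize (HN N (le_n N)). rewrite pow_inv in HN.
  pose proof (pow_lt 2 N ltac:(lra)).
  rewrite Rabs_right in HN by (apply Rle_ge, Rlt_le, Rinv_0_lt_compat; lra).
  apply Rle_lt_trans with (Rabs c * / 2 ^ N).
  { apply Rmult_le_compat_r; [apply Rlt_le, Rinv_0_lt_compat; lra | apply Rle_abs]. }
  apply Rmult_lt_compat_l with (r := Rabs c + 1) in HN; [| lra].
  replace ((Rabs c + 1) * (d / (Rabs c + 1))) with d in HN by (field; lra).
  assert (0 < / 2 ^ N) by (apply Rinv_0_lt_compat; lra). nra.
Qed.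

(** * Integrals over rectangles *)

Notation CRInt := (@RInt C_R_CompleteNormedModule).
Notation ex_CRInt := (@ex_RInt C_R_CompleteNormedModule).

Lemma is_RInt_Cmult (c : C) (f : R -> C) (a b : R) (l : C) :
  @is_RInt C_R_NormedModule f a b l -> @is_RInt C_R_NormedModule (fun t => c * f t)%C a b (c * l)%C.
Proof.
  intros Hf. destruct c as [c1 c2].
  pose proof (is_RInt_fct_extend_fst f a b l Hf) as H1.
  pose proof (is_RInt_fct_extend_snd f a b l Hf) as H2.
  apply (is_RInt_fct_extend_pair (fun t => ((c1, c2) * f t)%C) a b
    (c1 * fst l - c2 * snd l) (c1 * snd l + c2 * fst l)).
  - exact (is_RInt_minus _ _ a b _ _ (is_RInt_scal _ a b c1 _ H1) (is_RInt_scal _ a b c2 _ H2)).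
  - exact (is_RInt_plus _ _ a b _ _ (is_RInt_scal _ a b c1 _ H2) (is_RInt_scal _ a b c2 _ H1)).
Qed.

Lemma RInt_Cmult (c : C) (f : R -> C) (a b : R) : ex_CRInt f a b ->
  CRInt (fun t => c * f t)%C a b = (c * CRInt f a b)%C.
Proof.
  intros Hf. apply is_RInt_unique, is_RInt_Cmult, (RInt_correct (V := C_R_CompleteNormedModule)), Hf.
Qed.

Lemma RInt_Cminus (f g : R -> C) (a b : R) : ex_CRInt f a b -> ex_CRInt g a b ->
  CRInt (fun t => f t - g t)%C a b = (CRInt f a b - CRInt g a b)%C.
Proof.
  intros Hf Hg. apply is_RInt_unique, (is_RInt_minus (V := C_R_NormedModule) f g);
    apply (RInt_correct (V := C_R_CompleteNormedModule)); assumption.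
Qed.

Lemma Cmod_RInt_le (f : R -> C) (a b M : R) : a <= b -> ex_CRInt f a b ->
  (forall t, a <= t <= b -> Cmod (f t) <= M) -> Cmod (CRInt f a b) <= (b - a) * M.
Proof.
  intros Hab Hf HM. rewrite <- norm_C_R. apply (norm_RInt_le_const f); [exact Hab | |].
  - intros t Ht. rewrite norm_C_R. exact (HM t Ht).
  - apply (RInt_correct (V := C_R_CompleteNormedModule)), Hf.
Qed.

Lemma continuous_comp_lipschitz (f : C -> C) (g : R -> C) (t0 c : R) : 0 <= c ->
  (forall t, Cmod (g t - g t0) <= c * Rabs (t - t0)) -> Ccontinuous f (g t0) ->
  @continuous R_UniformSpace (NormedModule.UniformSpace R_AbsRing C_R_NormedModule)
    (fun t => f (g t)) t0.
Proof.
  intros Hc Hg Hf. apply filterlim_locally. intros eps.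
  destruct (Hf eps (cond_pos eps)) as [d [Hd Hd']].
  exists (mkposreal (d / (c + 1)) ltac:(apply Rdiv_lt_0_compat; lra)).
  intros t Ht. change (Rabs (t - t0) < d / (c + 1)) in Ht.
  assert (Hft : Cmod (f (g t) - f (g t0)) < eps).
  { apply Hd'. eapply Rle_lt_trans; [apply Hg |]. pose proof (Rabs_pos (t - t0)).
    apply Rle_lt_trans with (Rabs (t - t0) * (c + 1)); [nra |].
    apply Rlt_le_trans with (d / (c + 1) * (c + 1)); [apply Rmult_lt_compat_r; lra |].
    right; field; lra. }
  split.
  - exact (Rle_lt_trans _ _ _ (re_le_Cmod _) Hft).
  - exact (Rle_lt_trans _ _ _ (im_le_Cmod _) Hft).
Qed.

Lemma ex_RInt_comp_lipschitz (f : C -> C) (g : R -> C) (c a b : R) : 0 <= c ->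
  (forall t s, Cmod (g t - g s) <= c * Rabs (t - s)) -> (forall z, Ccontinuous f z) ->
  ex_CRInt (fun t => f (g t)) a b.
Proof.
  intros Hc Hg Hf. apply ex_RInt_continuous. intros t _.
  apply (continuous_comp_lipschitz f g t c Hc); [intros; apply Hg | apply Hf].
Qed.

Definition hside (K : C -> C) (y a b : R) : C := CRInt (fun x => K (x, y)) a b.
Definition vside (K : C -> C) (x a b : R) : C := CRInt (fun y => K (x, y)) a b.

(* The contour integral of [K] over the positively oriented boundary of [[x1, x2] × [y1, y2]]. *)
Definition rect_int (K : C -> C) (x1 x2 y1 y2 : R) : C :=
  (hside K y1 x1 x2 + Ci * vside K x2 y1 y2 - hside K y2 x1 x2 - Ci * vside K x1 y1 y2)%C.

Lemma Cmod_hline (t s y : R) : Cmod ((t, y) - (s, y)) = Rabs (t - s).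
Proof.
  rewrite <- Cmod_R. f_equal. apply injective_projections; simpl; ring.
Qed.

Lemma Cmod_vline (t s x : R) : Cmod ((x, t) - (x, s)) = Rabs (t - s).
Proof.
  replace ((x, t) - (x, s))%C with (RtoC (t - s) * Ci)%C
    by (apply injective_projections; cbn; ring).
  rewrite Cmod_mult, Cmod_Ci, Cmod_R. apply Rmult_1_r.
Qed.

Section Sides.

Variable K : C -> C.
Hypothesis HK : forall z, Ccontinuous K z.

Lemma ex_RInt_hline (y a b : R) : ex_CRInt (fun x => K (x, y)) a b.
Proof.
  apply (ex_RInt_comp_lipschitz K (fun x => (x, y)) 1); [lra | | exact HK].
  intros. rewrite Cmod_hline. lra.
Qed.

Lemma ex_RInt_vline (x a b : R) : ex_CRInt (fun y => K (x, y)) a b.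
Proof.
  apply (ex_RInt_comp_lipschitz K (fun y => (x, y)) 1); [lra | | exact HK].
  intros. rewrite Cmod_vline. lra.
Qed.

Lemma rect_int_quarters (x1 xm x2 y1 ym y2 : R) :
  rect_int K x1 x2 y1 y2 = (rect_int K x1 xm y1 ym + rect_int K xm x2 y1 ym +
                            rect_int K x1 xm ym y2 + rect_int K xm x2 ym y2)%C.
Proof.
  unfold rect_int, hside, vside.
  rewrite <- (RInt_Chasles (V := C_R_CompleteNormedModule) (fun x => K (x, y1)) x1 xm x2)
    by apply ex_RInt_hline.
  rewrite <- (RInt_Chasles (V := C_R_CompleteNormedModule) (fun x => K (x, y2)) x1 xm x2)
    by apply ex_RInt_hline.
  rewrite <- (RInt_Chasles (V := C_R_CompleteNormedModule) (fun y => K (x1, y)) y1 ym y2)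
    by apply ex_RInt_vline.
  rewrite <- (RInt_Chasles (V := C_R_CompleteNormedModule) (fun y => K (x2, y)) y1 ym y2)
    by apply ex_RInt_vline.
  change plus with Cplus. ring.
Qed.

Lemma Cmod_rect_int_le (a b w h M : R) : 0 <= w -> 0 <= h ->
  (forall u v, a <= u <= a + w -> b <= v <= b + h -> Cmod (K (u, v)) <= M) ->
  Cmod (rect_int K a (a + w) b (b + h)) <= 2 * (w + h) * M.
Proof.
  intros Hw Hh HM.
  assert (Hh1 : forall y, b <= y <= b + h -> Cmod (hside K y a (a + w)) <= w * M).
  { intros y Hy. unfold hside. replace w with (a + w - a) at 2 by ring.
    apply Cmod_RInt_le; [lra | apply ex_RInt_hline | intros t Ht; apply HM; lra]. }
  assert (Hv1 : forall x, a <= x <= a + w -> Cmod (Ci * vside K x b (b + h)) <= h * M).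
  { intros x Hx. rewrite Cmod_mult, Cmod_Ci, Rmult_1_l. unfold vside.
    replace h with (b + h - b) at 2 by ring.
    apply Cmod_RInt_le; [lra | apply ex_RInt_vline | intros t Ht; apply HM; lra]. }
  pose proof (Hh1 b ltac:(lra)). pose proof (Hh1 (b + h) ltac:(lra)).
  pose proof (Hv1 a ltac:(lra)). pose proof (Hv1 (a + w) ltac:(lra)).
  unfold rect_int.
  set (h1 := hside K b a (a + w)) in *. set (h2 := hside K (b + h) a (a + w)) in *.
  set (v1 := (Ci * vside K a b (b + h))%C) in *.
  set (v2 := (Ci * vside K (a + w) b (b + h))%C) in *.
  eapply Rle_trans; [apply Cmod_triangle |]. rewrite Cmod_opp.
  eapply Rle_trans; [apply Rplus_le_compat_r, Cmod_triangle |]. rewrite Cmod_opp.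
  eapply Rle_trans; [apply Rplus_le_compat_r, Rplus_le_compat_r, Cmod_triangle |].
  lra.
Qed.

End Sides.

Lemma rect_int_minus (K L : C -> C) (x1 x2 y1 y2 : R) :
  (forall z, Ccontinuous K z) -> (forall z, Ccontinuous L z) ->
  rect_int (fun z => K z - L z)%C x1 x2 y1 y2 = (rect_int K x1 x2 y1 y2 - rect_int L x1 x2 y1 y2)%C.
Proof.
  intros HK HL.
  assert (Hh : forall y a b, hside (fun z => K z - L z)%C y a b = (hside K y a b - hside L y a b)%C)
    by (intros; apply RInt_Cminus; apply ex_RInt_hline; assumption).
  assert (Hv : forall x a b, vside (fun z => K z - L z)%C x a b = (vside K x a b - vside L x a b)%C)
    by (intros; apply RInt_Cminus; apply ex_RInt_vline; assumption).
  unfold rect_int. rewrite !Hh, !Hv. ring.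
Qed.

Section Primitive.

Variables F f : C -> C.
Hypotheses (HF : forall z, is_Cderive F z (f z)) (Hf : forall z, Ccontinuous f z).

Lemma hside_primitive (y a b : R) : hside f y a b = (F (b, y) - F (a, y))%C.
Proof.
  unfold hside. apply (is_RInt_unique (V := C_R_CompleteNormedModule)).
  assert (Line : forall x, ((0, y) + RtoC x * RtoC 1)%C = (x, y))
    by (intros; apply injective_projections; simpl; ring).
  apply (is_RInt_derive (V := C_R_CompleteNormedModule) (fun x => F (x, y)) (fun x => f (x, y))).
  - intros x _. pose proof (is_derive_on_line F (0, y) (RtoC 1) (f (x, y)) x) as D.
    rewrite Line, Cmult_1_l in D. specialize (D (HF _)).
    eapply is_derive_ext; [| exact D]. intros t; simpl. rewrite Line. reflexivity.
  - intros x _. apply (continuous_comp_lipschitz f (fun x => (x, y)) x 1); [lra | | apply Hf].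
    intros. rewrite Cmod_hline. lra.
Qed.

Lemma vside_primitive (x a b : R) : (Ci * vside f x a b)%C = (F (x, b) - F (x, a))%C.
Proof.
  unfold vside. rewrite <- RInt_Cmult by (apply ex_RInt_vline; exact Hf).
  apply (is_RInt_unique (V := C_R_CompleteNormedModule)).
  assert (Line : forall t, ((x, 0) + RtoC t * Ci)%C = (x, t))
    by (intros; apply injective_projections; simpl; ring).
  apply (is_RInt_derive (V := C_R_CompleteNormedModule) (fun t => F (x, t))
    (fun t => Ci * f (x, t))%C).
  - intros t _. pose proof (is_derive_on_line F (x, 0) Ci (f (x, t)) t) as D.
    rewrite Line in D. specialize (D (HF _)).
    eapply is_derive_ext; [| exact D]. intros s; simpl. rewrite Line. reflexivity.
  - intros t _. apply (continuous_comp_lipschitz (fun z => Ci * f z)%C (fun t => (x, t)) t 1);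
      [lra | | apply Ccontinuous_scal, Hf].
    intros. rewrite Cmod_vline. lra.
Qed.

Lemma rect_int_primitive (x1 x2 y1 y2 : R) : rect_int f x1 x2 y1 y2 = RtoC 0.
Proof.
  unfold rect_int. rewrite !hside_primitive, (vside_primitive x2), (vside_primitive x1). ring.
Qed.

End Primitive.

Lemma rect_int_affine (k l p : C) (x1 x2 y1 y2 : R) :
  rect_int (fun z => k + l * (z - p))%C x1 x2 y1 y2 = RtoC 0.
Proof.
  apply (rect_int_primitive (fun z => k * z + (l * / RtoC 2) * ((z - p) * (z - p)))%C).
  - intros z. cbv beta.
    replace (k + l * (z - p))%C
      with (k * 1 + l * / RtoC 2 * (1 * (z - p) + (z - p) * 1))%C
      by (field; injection; lra).
    apply is_Cderive_plus; [apply is_Cderive_scal, is_Cderive_id |].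
    apply is_Cderive_scal, (is_Cderive_mult (fun x => x - p) (fun x => x - p))%C;
      apply is_Cderive_sub_const.
  - intros z. exact (is_Cderive_Ccontinuous _ z _ (is_Cderive_affine k l p z)).
Qed.

(** * Goursat's lemma and Liouville's theorem *)

Lemma rect_int_small (K : C -> C) (p l : C) : entire K -> is_Cderive K p l ->
  forall eps, 0 < eps -> exists d, 0 < d /\ forall a b w h, 0 <= w -> 0 <= h -> w + h < d ->
    a <= fst p <= a + w -> b <= snd p <= b + h ->
    Cmod (rect_int K a (a + w) b (b + h)) <= 2 * eps * ((w + h) * (w + h)).
Proof.
  intros HKe HK eps Heps. destruct (is_Cderive_bound _ _ _ HK eps Heps) as [d [Hd Hd']].
  exists d. split; [exact Hd |]. intros a b w h Hw Hh Hwh Hpa Hpb.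
  set (A := fun z => (K p + l * (z - p))%C).
  assert (HA : forall z, is_Cderive A z l) by (intros z; apply is_Cderive_affine).
  assert (HKA : forall z, Ccontinuous (fun z => K z - A z)%C z).
  { intros z. destruct (HKe z) as [lK HlK].
    exact (is_Cderive_Ccontinuous _ z _ (is_Cderive_minus _ _ z _ _ HlK (HA z))). }
  replace (rect_int K a (a + w) b (b + h))
    with (rect_int (fun z => K z - A z)%C a (a + w) b (b + h)).
  2: { rewrite rect_int_minus; [unfold A; rewrite rect_int_affine; ring |
         apply entire_Ccontinuous, HKe | intros z; exact (is_Cderive_Ccontinuous _ z _ (HA z))]. }
  replace (2 * eps * ((w + h) * (w + h))) with (2 * (w + h) * (eps * (w + h))) by ring.
  apply Cmod_rect_int_le; [exact HKA | exact Hw | exact Hh |].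
  intros u v Hu Hv.
  assert (Hup : Cmod ((u, v) - p) <= w + h).
  { eapply Rle_trans; [apply Cmod_le_re_im |]. simpl.
    assert (Rabs (u + - fst p) <= w) by (apply Rabs_le_between; lra).
    assert (Rabs (v + - snd p) <= h) by (apply Rabs_le_between; lra). lra. }
  unfold A. replace (K (u, v) - (K p + l * ((u, v) - p)))%C
    with (K (u, v) - K p - ((u, v) - p) * l)%C by ring.
  eapply Rle_trans; [apply Hd'; lra |]. apply Rmult_le_compat_l; lra.
Qed.

Lemma rect_int_quarter_large (K : C -> C) (a b w h D N : R) : (forall z, Ccontinuous K z) ->
  0 <= N -> D <= Cmod (rect_int K a (a + (w + w)) b (b + (h + h))) * N ->
  exists a' b', D <= Cmod (rect_int K a' (a' + w) b' (b' + h)) * (4 * N) /\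
    (a' = a \/ a' = a + w) /\ (b' = b \/ b' = b + h).
Proof.
  intros HK HN HD.
  rewrite (rect_int_quarters K HK a (a + w) (a + (w + w)) b (b + h) (b + (h + h))) in HD.
  replace (a + (w + w)) with (a + w + w) in HD by ring.
  replace (b + (h + h)) with (b + h + h) in HD by ring.
  set (r1 := rect_int K a (a + w) b (b + h)) in HD.
  set (r2 := rect_int K (a + w) (a + w + w) b (b + h)) in HD.
  set (r3 := rect_int K a (a + w) (b + h) (b + h + h)) in HD.
  set (r4 := rect_int K (a + w) (a + w + w) (b + h) (b + h + h)) in HD.
  destruct (Rle_lt_dec D (Cmod r1 * (4 * N))) as [q | q1]; [exists a, b; auto |].
  destruct (Rle_lt_dec D (Cmod r2 * (4 * N))) as [q | q2]; [exists (a + w), b; auto |].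
  destruct (Rle_lt_dec D (Cmod r3 * (4 * N))) as [q | q3]; [exists a, (b + h); auto |].
  destruct (Rle_lt_dec D (Cmod r4 * (4 * N))) as [q | q4]; [exists (a + w), (b + h); auto |].
  exfalso.
  assert (Cmod (r1 + r2 + r3 + r4) <= Cmod r1 + Cmod r2 + Cmod r3 + Cmod r4).
  { eapply Rle_trans; [apply Cmod_triangle |]. apply Rplus_le_compat_r.
    eapply Rle_trans; [apply Cmod_triangle |]. apply Rplus_le_compat_r. apply Cmod_triangle. }
  pose proof (Cmod_ge_0 (r1 + r2 + r3 + r4)). nra.
Qed.

Lemma dyadic_sum_sq (W H : R) (n : nat) :
  (W / 2 ^ n + H / 2 ^ n) * (W / 2 ^ n + H / 2 ^ n) * 4 ^ n = (W + H) * (W + H).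
Proof.
  pose proof (pow_lt 2 n ltac:(lra)).
  replace 4 with (2 * 2) by ring. rewrite Rpow_mult_distr. field. lra.
Qed.

Lemma goursat (K : C -> C) : entire K ->
  forall x1 x2 y1 y2, x1 < x2 -> y1 < y2 -> rect_int K x1 x2 y1 y2 = RtoC 0.
Proof.
  intros HK x1 x2 y1 y2 Hx Hy. pose proof (entire_Ccontinuous K HK) as HKc.
  apply Cmod_eq_0, NNPP. intros Hne.
  set (D := Cmod (rect_int K x1 x2 y1 y2)).
  assert (HD : 0 < D)
    by (pose proof (Cmod_ge_0 (rect_int K x1 x2 y1 y2)) as HD0; fold D in HD0, Hne; lra).
  set (W := x2 - x1). set (H := y2 - y1).
  assert (HWH : 0 < W + H) by (unfold W, H; lra).
  (* Some rectangle of the n-th quartering carries at least [D / 4 ^ n]. *)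
  set (P := fun n a b => D <= Cmod (rect_int K a (a + W / 2 ^ n) b (b + H / 2 ^ n)) * 4 ^ n).
  assert (P0 : P O x1 y1).
  { unfold P, W, H. simpl. rewrite !Rdiv_1_r, Rmult_1_r.
    replace (x1 + (x2 - x1)) with x2 by ring. replace (y1 + (y2 - y1)) with y2 by ring.
    apply Rle_refl. }
  assert (Hhalf : forall L n, L / 2 ^ n = L / 2 ^ S n + L / 2 ^ S n).
  { intros L n. pose proof (pow_lt 2 n ltac:(lra)). simpl. field. lra. }
  destruct (nested_rectangles_limit W H P ltac:(unfold W; lra) ltac:(unfold H; lra)) with x1 y1
    as [px [py Hlim]]; [| exact P0 |].
  { intros n a b Hp. unfold P in Hp. rewrite (Hhalf W n), (Hhalf H n) in Hp.
    destruct (rect_int_quarter_large K a b _ _ D _ HKc (pow_le 4 n ltac:(lra)) Hp)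
      as [a' [b' [Hq [Ha Hb]]]].
    exists (a', b'). split; [exact Hq | split; assumption]. }
  destruct (HK (px, py)) as [l Hl].
  set (e := D / (4 * ((W + H) * (W + H)))).
  assert (He : 0 < e) by (apply Rdiv_lt_0_compat; nra).
  destruct (rect_int_small K (px, py) l HK Hl e He) as [d [Hd Hsmall]].
  destruct (exists_div_pow2_lt (W + H) d Hd) as [n Hn].
  destruct (Hlim n) as [a [b [Hp [Ha Hb]]]]. unfold P in Hp.
  pose proof (pow_lt 2 n ltac:(lra)).
  assert (0 <= W / 2 ^ n /\ 0 <= H / 2 ^ n) as [Hw Hh].
  { unfold W, H. split; apply Rmult_le_pos; try lra; apply Rlt_le, Rinv_0_lt_compat; lra. }
  specialize (Hsmall a b (W / 2 ^ n) (H / 2 ^ n) Hw Hh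
    ltac:(replace (W / 2 ^ n + H / 2 ^ n) with ((W + H) / 2 ^ n) by (field; lra); lra) Ha Hb).
  assert (Hbound : D <= 2 * e * ((W + H) * (W + H))).
  { rewrite <- (dyadic_sum_sq W H n). eapply Rle_trans; [exact Hp |].
    rewrite <- Rmult_assoc. apply Rmult_le_compat_r; [apply pow_le; lra | exact Hsmall]. }
  unfold e in Hbound. replace (2 * (D / (4 * ((W + H) * (W + H)))) * ((W + H) * (W + H)))
    with (D / 2) in Hbound by (field; lra).
  lra.
Qed.

Lemma vside_periodic_const (K : C -> C) : entire K -> (forall z, K (z + two_pi_i)%C = K z) ->
  forall x, vside K x 0 (2 * PI) = vside K 0 0 (2 * PI).
Proof.
  intros HK Hper.
  assert (Hlt : forall x1 x2, x1 < x2 -> vside K x1 0 (2 * PI) = vside K x2 0 (2 * PI)).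
  { intros x1 x2 Hx.
    pose proof (goursat K HK x1 x2 0 (2 * PI) Hx ltac:(pose proof PI_RGT_0; lra)) as G.
    assert (Htop : hside K (2 * PI) x1 x2 = hside K 0 x1 x2).
    { unfold hside. apply (RInt_ext (V := C_R_CompleteNormedModule)). intros x _.
      rewrite <- (Hper (x, 0)). f_equal. apply injective_projections; simpl; ring. }
    unfold rect_int in G. rewrite Htop in G.
    set (v1 := vside K x1 0 (2 * PI)) in *. set (v2 := vside K x2 0 (2 * PI)) in *.
    assert (E : (Ci * (v1 - v2))%C = (- RtoC 0)%C) by (rewrite <- G; ring).
    apply Ceq_minus. replace (v1 - v2)%C with (/ Ci * (Ci * (v1 - v2)))%C.
    - rewrite E. ring.
    - field. exact Ci_neq_0. }
  intros x. destruct (Rtotal_order x 0) as [Hx | [-> | Hx]];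
    [apply Hlt | reflexivity | symmetry; apply Hlt]; exact Hx.
Qed.

Lemma is_Cderive_cexp_opp (z : C) : is_Cderive (fun u => cexp (- u)) z (- cexp (- z))%C.
Proof.
  assert (Hopp : is_Cderive (fun u => RtoC 0 - u)%C z (RtoC 0 - RtoC 1)%C)
    by (apply is_Cderive_minus; [apply is_Cderive_const | apply is_Cderive_id]).
  pose proof (is_Cderive_comp cexp _ z _ _ (is_Cderive_cexp _) Hopp) as D.
  replace (- cexp (- z))%C with ((RtoC 0 - RtoC 1) * cexp (RtoC 0 - z))%C
    by (replace (RtoC 0 - z)%C with (- z)%C by ring; ring).
  eapply is_derive_ext; [| exact D]. intros u; simpl. f_equal. ring.
Qed.

Lemma is_Cderive_const_plus_cexp_opp (l a u : C) :
  is_Cderive (fun u => l + a * cexp (- u))%C u (RtoC 0 + a * - cexp (- u))%C.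
Proof.
  apply is_Cderive_plus; [apply is_Cderive_const | apply is_Cderive_scal, is_Cderive_cexp_opp].
Qed.

Lemma vside_const_plus_cexp_opp (l a : C) (x : R) :
  vside (fun u => l + a * cexp (- u))%C x 0 (2 * PI) = (RtoC (2 * PI) * l)%C.
Proof.
  set (Lf := fun u => (l + a * cexp (- u))%C).
  assert (HLf : forall u, is_Cderive (fun z => l * z - a * cexp (- z))%C u (Lf u)).
  { intros u. unfold Lf. replace (l + a * cexp (- u))%C with (l * 1 - a * - cexp (- u))%C by ring.
    apply is_Cderive_minus; apply is_Cderive_scal;
      [apply is_Cderive_id | apply is_Cderive_cexp_opp]. }
  assert (HLfc : forall u, Ccontinuous Lf u)
    by (intros u; exact (is_Cderive_Ccontinuous _ u _ (is_Cderive_const_plus_cexp_opp l a u))).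
  pose proof (vside_primitive _ Lf HLf HLfc x 0 (2 * PI)) as E.
  replace (x, 2 * PI) with ((x, 0) + two_pi_i)%C in E
    by (apply injective_projections; simpl; ring).
  cbv beta in E. rewrite cexp_opp_periodic in E.
  replace (vside Lf x 0 (2 * PI)) with (/ Ci * (Ci * vside Lf x 0 (2 * PI)))%C
    by (field; exact Ci_neq_0).
  rewrite E. replace (RtoC (2 * PI)) with (/ Ci * two_pi_i)%C.
  - ring.
  - unfold two_pi_i, Ci, Cinv. apply injective_projections; simpl; field.
Qed.

Section Liouville.

Variables (Phi : C -> C) (w0 l : C).
Hypotheses (HPhi : entire Phi) (Hl : is_Cderive Phi w0 l).

(* With [w = w0 + exp u], [vside K x 0 (2 * PI)] is [-i] times the contour integral of
   [Phi w / (w - w0) ^ 2] over the circle [|w - w0| = exp x]. *)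
Let K (u : C) : C := (Phi (w0 + cexp u) * cexp (- u))%C.

Let K_entire : entire K.
Proof.
  intros u. destruct (HPhi (w0 + cexp u)%C) as [lP HlP]. eexists. apply is_Cderive_mult.
  - apply (is_Cderive_comp Phi (fun u => w0 + cexp u)%C); [exact HlP |].
    apply is_Cderive_plus; [apply is_Cderive_const | apply is_Cderive_cexp].
  - apply is_Cderive_cexp_opp.
Qed.

Let K_periodic (u : C) : K (u + two_pi_i)%C = K u.
Proof.
  unfold K. rewrite cexp_periodic, cexp_opp_periodic. reflexivity.
Qed.

Let vside_K_near_derive : forall eps, 0 < eps -> exists d, 0 < d /\ forall x, exp x < d ->
  Cmod (vside K x 0 (2 * PI) - RtoC (2 * PI) * l) <= 2 * PI * eps.
Proof.
  intros eps Heps. pose proof PI_RGT_0.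
  set (Lf := fun u => (l + Phi w0 * cexp (- u))%C).
  destruct (is_Cderive_bound _ _ _ Hl eps Heps) as [d [Hd Hd']].
  exists d. split; [exact Hd |]. intros x Hx.
  rewrite <- (vside_const_plus_cexp_opp l (Phi w0) x). fold Lf. unfold vside.
  assert (HKLf : forall z, Ccontinuous (fun z => K z - Lf z)%C z).
  { intros z. destruct (K_entire z) as [lK HlK].
    exact (is_Cderive_Ccontinuous _ z _
      (is_Cderive_minus _ _ z _ _ HlK (is_Cderive_const_plus_cexp_opp l (Phi w0) z))). }
  rewrite <- RInt_Cminus; [| apply ex_RInt_vline, entire_Ccontinuous, K_entire |].
  2: { apply ex_RInt_vline. intros z.
       exact (is_Cderive_Ccontinuous _ z _ (is_Cderive_const_plus_cexp_opp l (Phi w0) z)). }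
  replace (2 * PI * eps) with ((2 * PI - 0) * eps) by ring.
  apply Cmod_RInt_le; [lra | apply (ex_RInt_vline _ HKLf) |].
  intros y _. set (zeta := cexp (x, y)).
  assert (Hzeta : Cmod zeta = exp x) by (unfold zeta; rewrite Cmod_cexp; reflexivity).
  assert (Hinv : (zeta * cexp (- (x, y)))%C = RtoC 1) by apply cexp_opp_r.
  replace (K (x, y) - Lf (x, y))%C
    with ((Phi (w0 + zeta) - Phi w0 - ((w0 + zeta) - w0) * l) * cexp (- (x, y)))%C.
  2: { unfold K, Lf. fold zeta. rewrite <- (Cmult_1_l l) at 2. rewrite <- Hinv. ring. }
  rewrite Cmod_mult, Cmod_cexp.
  specialize (Hd' (w0 + zeta)%C). replace ((w0 + zeta) - w0)%C with zeta in Hd' |- * by ring.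
  rewrite Hzeta in Hd'. specialize (Hd' Hx).
  apply Rle_trans with (eps * exp x * exp (fst (- (x, y))%C)).
  - apply Rmult_le_compat_r; [left; apply exp_pos | exact Hd'].
  - simpl. rewrite Rmult_assoc, <- exp_plus, Rplus_opp_r, exp_0. lra.
Qed.

Lemma bounded_entire_derive_0 (M : R) : (forall z, Cmod (Phi z) <= M) -> l = RtoC 0.
Proof.
  intros HM. pose proof PI_RGT_0.
  assert (HM0 : 0 <= M) by (eapply Rle_trans; [apply Cmod_ge_0 | apply (HM (RtoC 0))]).
  set (I := vside K 0 0 (2 * PI)).
  assert (HI : forall x, vside K x 0 (2 * PI) = I)
    by (intros x; exact (vside_periodic_const K K_entire K_periodic x)).
  assert (Hdecay : forall x, Cmod I <= 2 * PI * (M * exp (- x))).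
  { intros x. rewrite <- (HI x). unfold vside.
    replace (2 * PI * (M * exp (- x))) with ((2 * PI - 0) * (M * exp (- x))) by ring.
    apply Cmod_RInt_le; [lra | apply ex_RInt_vline, entire_Ccontinuous, K_entire |].
    intros y _. unfold K. rewrite Cmod_mult, Cmod_cexp. simpl.
    apply Rmult_le_compat_r; [left; apply exp_pos | apply HM]. }
  assert (HI0 : I = RtoC 0).
  { apply Cmod_small_eq_0. intros eps Heps.
    eapply Rle_trans; [apply (Hdecay (ln (2 * PI * (M + 1) / eps))) |].
    rewrite exp_Ropp, exp_ln by (apply Rdiv_lt_0_compat; nra).
    apply Rle_trans with (eps * (M / (M + 1))); [right; field; lra |].
    rewrite <- (Rmult_1_r eps) at 2. apply Rmult_le_compat_l; [lra |].
    apply Rmult_le_reg_r with (M + 1); [lra |]. unfold Rdiv.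
    rewrite Rmult_assoc, Rinv_l by lra. lra. }
  assert (Hl0 : (RtoC (2 * PI) * l)%C = RtoC 0).
  { apply Ceq_minus, Cmod_small_eq_0. intros eps Heps.
    destruct (vside_K_near_derive (eps / (2 * PI)) ltac:(apply Rdiv_lt_0_compat; lra))
      as [d [Hd Hnear]].
    specialize (Hnear (ln (d / 2)) ltac:(rewrite exp_ln; lra)).
    rewrite HI, HI0 in Hnear. rewrite <- Cmod_opp.
    replace (2 * PI * (eps / (2 * PI))) with eps in Hnear by (field; lra).
    replace (- (RtoC (2 * PI) * l - RtoC 0))%C with (RtoC 0 - RtoC (2 * PI) * l)%C by ring.
    exact Hnear. }
  replace l with (/ RtoC (2 * PI) * (RtoC (2 * PI) * l))%C
    by (field; intros E; injection E; lra).
  rewrite Hl0. ring.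
Qed.

End Liouville.

Theorem liouville (Phi : C -> C) (M : R) : entire Phi -> (forall z, Cmod (Phi z) <= M) ->
  forall w, Phi w = Phi (RtoC 0).
Proof.
  intros HPhi HM. apply is_Cderive_0_const. intros z. destruct (HPhi z) as [l Hl].
  replace (RtoC 0) with l by exact (bounded_entire_derive_0 Phi z l HPhi Hl M HM). exact Hl.
Qed.

(** * Functions with a doubly periodic modulus *)

Definition unbounded_above_on (g : R -> R -> R) (a b w : R) : Prop :=
  forall B, exists s t, a <= s <= a + w /\ b <= t <= b + w /\ B < g s t.

Lemma unbounded_above_on_quarter (g : R -> R -> R) (a b w : R) :
  unbounded_above_on g a b (w + w) -> exists a' b', unbounded_above_on g a' b' w /\
    (a' = a \/ a' = a + w) /\ (b' = b \/ b' = b + w).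
Proof.
  intros Hunb. apply NNPP. intros Hnone.
  assert (Hbd : forall a' b', (a' = a \/ a' = a + w) -> (b' = b \/ b' = b + w) ->
    exists B, forall s t, a' <= s <= a' + w -> b' <= t <= b' + w -> g s t <= B).
  { intros a' b' Ha Hb. apply NNPP. intros Hn. apply Hnone. exists a', b'.
    split; [| auto]. intros B. apply NNPP. intros Hn'. apply Hn. exists B.
    intros s t Hs Ht. apply Rnot_lt_le. intros Hlt. apply Hn'. exists s, t. auto. }
  destruct (Hbd a b) as [B1 HB1]; auto. destruct (Hbd (a + w) b) as [B2 HB2]; auto.
  destruct (Hbd a (b + w)) as [B3 HB3]; auto. destruct (Hbd (a + w) (b + w)) as [B4 HB4]; auto.
  destruct (Hunb (Rmax (Rmax B1 B2) (Rmax B3 B4))) as [s [t [Hs [Ht Hgt]]]].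
  pose proof (Rmax_l B1 B2). pose proof (Rmax_r B1 B2).
  pose proof (Rmax_l B3 B4). pose proof (Rmax_r B3 B4).
  pose proof (Rmax_l (Rmax B1 B2) (Rmax B3 B4)). pose proof (Rmax_r (Rmax B1 B2) (Rmax B3 B4)).
  destruct (Rle_lt_dec s (a + w)); destruct (Rle_lt_dec t (b + w)).
  - assert (g s t <= B1) by (apply HB1; lra). lra.
  - assert (g s t <= B3) by (apply HB3; lra). lra.
  - assert (g s t <= B2) by (apply HB2; lra). lra.
  - assert (g s t <= B4) by (apply HB4; lra). lra.
Qed.

Lemma bounded_on_unit_square (g : R -> R -> R) :
  (forall s t eps, 0 < eps -> exists d, 0 < d /\ forall s' t',
     Rabs (s' - s) < d -> Rabs (t' - t) < d -> Rabs (g s' t' - g s t) < eps) ->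
  exists B, forall s t, 0 <= s <= 1 -> 0 <= t <= 1 -> g s t <= B.
Proof.
  intros Hg. apply NNPP. intros Hunb.
  set (P := fun n a b => unbounded_above_on g a b (1 / 2 ^ n)).
  assert (P0 : P O 0 0).
  { intros B. apply NNPP. intros Hn. apply Hunb. exists B. intros s t Hs Ht.
    apply Rnot_lt_le. intros Hlt. apply Hn. exists s, t. simpl. lra. }
  destruct (nested_rectangles_limit 1 1 P ltac:(lra) ltac:(lra)) with 0 0
    as [px [py Hlim]]; [| exact P0 |].
  { intros n a b Hp.
    assert (Hw : 1 / 2 ^ n = 1 / 2 ^ S n + 1 / 2 ^ S n)
      by (pose proof (pow_lt 2 n); simpl; field; lra).
    unfold P in Hp. rewrite Hw in Hp.
    destruct (unbounded_above_on_quarter g a b _ Hp) as [a' [b' Hq]]. exists (a', b'). exact Hq. }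
  destruct (Hg px py 1 Rlt_0_1) as [d [Hd Hd']].
  destruct (exists_div_pow2_lt 1 d Hd) as [n Hn].
  destruct (Hlim n) as [a [b [Hp [Ha Hb]]]].
  destruct (Hp (g px py + 1)) as [s [t [Hs [Ht Hgt]]]].
  assert (Hsd : Rabs (s - px) < d)
    by (apply Rle_lt_trans with (1 / 2 ^ n); [apply Rabs_le_between |]; lra).
  assert (Htd : Rabs (t - py) < d)
    by (apply Rle_lt_trans with (1 / 2 ^ n); [apply Rabs_le_between |]; lra).
  specialize (Hd' s t Hsd Htd). apply Rabs_def2 in Hd'. lra.
Qed.

Lemma periodic_Z (f : C -> R) (v : C) : (forall w, f (w + v)%C = f w) ->
  forall (m : Z) w, f (w + RtoC (IZR m) * v)%C = f w.
Proof.
  intros Hv m. induction m as [| m IH | m IH] using Z.peano_ind; intros w.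
  - f_equal. ring.
  - rewrite succ_IZR, <- (IH w), <- (Hv (w + RtoC (IZR m) * v)%C). f_equal. rewrite RtoC_plus. ring.
  - rewrite <- Z.sub_1_r, minus_IZR, <- (IH w), <- (Hv (w + RtoC (IZR m - 1) * v)%C).
    f_equal. rewrite RtoC_minus. ring.
Qed.

Lemma bounded_of_periodic_modulus (Phi : C -> C) (u v : C) :
  (forall z, Ccontinuous Phi z) -> fst u * snd v - snd u * fst v <> 0 ->
  (forall w, Cmod (Phi (w + u)%C) = Cmod (Phi w)) ->
  (forall w, Cmod (Phi (w + v)%C) = Cmod (Phi w)) ->
  exists B, forall w, Cmod (Phi w) <= B.
Proof.
  intros HPhi Hdet Hu Hv.
  set (g := fun s t => Cmod (Phi (RtoC s * u + RtoC t * v)%C)).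
  destruct (bounded_on_unit_square g) as [B HB].
  { intros s t eps Heps.
    destruct (HPhi (RtoC s * u + RtoC t * v)%C eps Heps) as [d [Hd Hd']].
    set (c := Cmod u + Cmod v + 1). pose proof (Cmod_ge_0 u). pose proof (Cmod_ge_0 v).
    exists (d / c). split; [apply Rdiv_lt_0_compat; unfold c; lra |]. intros s' t' Hs Ht.
    unfold g. eapply Rle_lt_trans; [apply Cmod_reverse_triangle | apply Hd'].
    replace (RtoC s' * u + RtoC t' * v - (RtoC s * u + RtoC t * v))%C
      with (RtoC (s' - s) * u + RtoC (t' - t) * v)%C by (rewrite !RtoC_minus; ring).
    eapply Rle_lt_trans; [apply Cmod_triangle |]. rewrite !Cmod_mult, !Cmod_R.
    pose proof (Rabs_pos (s' - s)). pose proof (Rabs_pos (t' - t)).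
    apply Rlt_le_trans with (d / c * c); [unfold c in *; nra | right; field; unfold c; lra]. }
  (* Cramer's rule gives [(x, y) = s u + t v]; integer shifts move [(s, t)] into [[0, 1]²]. *)
  exists B. intros [x y].
  set (det := fst u * snd v - snd u * fst v).
  set (s := (x * snd v - y * fst v) / det). set (t := (fst u * y - snd u * x) / det).
  destruct (archimed s) as [Hs1 Hs2]. destruct (archimed t) as [Ht1 Ht2].
  set (m := (up s - 1)%Z). set (n := (up t - 1)%Z).
  assert (Hw : ((x, y) : C) =
    (RtoC (s - IZR m) * u + RtoC (t - IZR n) * v + RtoC (IZR m) * u + RtoC (IZR n) * v)%C).
  { rewrite !RtoC_minus. apply injective_projections; simpl; unfold s, t, det in *;
      field; exact Hdet. }
  rewrite Hw, (periodic_Z (fun w => Cmod (Phi w)) v Hv), (periodic_Z (fun w => Cmod (Phi w)) u Hu).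
  apply HB; unfold m, n; rewrite minus_IZR; lra.
Qed.

(** * Equivariant holomorphic maps *)

Lemma exp_form_of_const (F : C -> C) (c : C) :
  (forall w, (F w * cexp (- (c * w)))%C = (F (RtoC 0) * cexp (- (c * RtoC 0)))%C) ->
  forall w, F w = (F (RtoC 0) * cexp (c * w))%C.
Proof.
  intros H w. replace (- (c * RtoC 0))%C with (RtoC 0) in H by ring.
  rewrite cexp_0, Cmult_1_r in H.
  rewrite <- (H w), <- Cmult_assoc, (Cmult_comm (cexp _)), cexp_opp_r. ring.
Qed.

Lemma is_Cderive_mul_cexp (F : C -> C) (c w dF : C) : is_Cderive F w dF ->
  is_Cderive (fun w => F w * cexp (- (c * w)))%C w ((dF - c * F w) * cexp (- (c * w)))%C.
Proof.
  intros HF.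
  assert (Hc : is_Cderive (fun w => c * w)%C w (c * 1)%C) by apply is_Cderive_scal, is_Cderive_id.
  pose proof (is_Cderive_mult _ _ w _ _ HF
    (is_Cderive_comp (fun u => cexp (- u)) _ w _ _ (is_Cderive_cexp_opp _) Hc)) as D.
  replace ((dF - c * F w) * cexp (- (c * w)))%C
    with (dF * cexp (- (c * w)) + F w * (c * 1 * - cexp (- (c * w))))%C by ring.
  exact D.
Qed.

Lemma Cseq_limit_unique (u : nat -> C) (l1 l2 : C) :
  (forall eps, 0 < eps -> exists N, forall n, (N <= n)%nat -> Cmod (u n - l1) <= eps) ->
  (forall eps, 0 < eps -> exists N, forall n, (N <= n)%nat -> Cmod (u n - l2) <= eps) ->
  l1 = l2.
Proof.
  intros H1 H2. apply Ceq_minus, Cmod_small_eq_0. intros eps Heps.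
  destruct (H1 (eps / 2) ltac:(lra)) as [N1 HN1]. destruct (H2 (eps / 2) ltac:(lra)) as [N2 HN2].
  specialize (HN1 (max N1 N2) ltac:(lia)). specialize (HN2 (max N1 N2) ltac:(lia)).
  replace (l1 - l2)%C with ((u (max N1 N2) - l2) - (u (max N1 N2) - l1))%C by ring.
  eapply Rle_trans; [apply Cmod_triangle |]. rewrite Cmod_opp. lra.
Qed.

Lemma Cmod_lt_of_ball (z y : C) (d : R) : @ball C_UniformSpace z d y -> Cmod (y - z) < 2 * d.
Proof.
  intros [H1 H2]. change (Rabs (fst y - fst z) < d) in H1. change (Rabs (snd y - snd z) < d) in H2.
  eapply Rle_lt_trans; [apply Cmod_le_re_im |]. simpl. unfold Rminus in *. lra.
Qed.

Lemma log_derivative_limit (psi : C -> C) (g s : nat -> C) (z l : C) :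
  z <> RtoC 0 -> psi z <> RtoC 0 -> is_Cderive psi z l ->
  (forall n, g n <> RtoC 1) -> (forall n, psi (g n * z)%C = (s n * psi z)%C) ->
  filterlim g eventually (locally (RtoC 1)) ->
  forall eps, 0 < eps -> exists N, forall n, (N <= n)%nat ->
    Cmod ((s n - 1) / (g n - 1) - z * l / psi z) <= eps.
Proof.
  intros Hz Hpz Hl Hg1 Hs Hlim eps Heps.
  assert (HPm : 0 < Cmod (psi z)) by (apply Cmod_gt_0; exact Hpz).
  assert (Hzm : 0 < Cmod z) by (apply Cmod_gt_0; exact Hz).
  destruct (is_Cderive_bound _ _ _ Hl (eps * Cmod (psi z) / Cmod z)
    ltac:(apply Rdiv_lt_0_compat; nra)) as [d [Hd Hd']].
  assert (He : 0 < d / (2 * Cmod z + 1)) by (apply Rdiv_lt_0_compat; lra).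
  destruct (proj1 (filterlim_locally g (RtoC 1)) Hlim (mkposreal _ He)) as [N HN].
  exists N. intros n Hn. specialize (HN n Hn). apply Cmod_lt_of_ball in HN. simpl in HN.
  set (u := (g n - 1)%C) in HN.
  assert (Hu : u <> RtoC 0) by (intros E; apply (Hg1 n), Ceq_minus, E).
  assert (Hum : 0 < Cmod u) by (apply Cmod_gt_0; exact Hu).
  assert (Hyz : (g n * z - z)%C = (u * z)%C) by (unfold u; ring).
  assert (Hyd : Cmod (g n * z - z) < d).
  { rewrite Hyz, Cmod_mult.
    apply Rlt_le_trans with (2 * (d / (2 * Cmod z + 1)) * Cmod z); [apply Rmult_lt_compat_r; lra |].
    apply Rle_trans with (d * (2 * Cmod z / (2 * Cmod z + 1))); [right; field; lra |].
    rewrite <- (Rmult_1_r d) at 2. apply Rmult_le_compat_l; [lra |].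
    apply Rmult_le_reg_r with (2 * Cmod z + 1); [lra |]. unfold Rdiv.
    rewrite Rmult_assoc, Rinv_l by lra. lra. }
  specialize (Hd' _ Hyd). rewrite Hs, Hyz, !Cmod_mult in Hd'.
  replace ((s n - 1) / (g n - 1) - z * l / psi z)%C
    with ((s n * psi z - psi z - u * z * l) / (u * psi z))%C by (unfold u; field; auto).
  rewrite Cmod_div, Cmod_mult by (apply Cmult_neq_0; auto).
  apply Rmult_le_reg_r with (Cmod u * Cmod (psi z)); [nra |].
  unfold Rdiv. rewrite Rmult_assoc, Rinv_l, Rmult_1_r by nra.
  eapply Rle_trans; [exact Hd' | right; field; lra].
Qed.

Lemma entire_comp_cexp (psi : C -> C) : holomorphic_Cstar psi -> entire (fun w => psi (cexp w)).
Proof.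
  intros Hpsi w. destruct (Hpsi (cexp w) (cexp_neq_0 w)) as [l Hl].
  exists (cexp w * l)%C. apply (is_Cderive_comp psi cexp);
    [exact (is_Cderive_of_C_NormedModule _ _ _ Hl) | apply is_Cderive_cexp].
Qed.

Lemma exp_form_of_seq (psi : C -> C) (g s : nat -> C) :
  holomorphic_Cstar psi -> (forall z, z <> RtoC 0 -> psi z <> RtoC 0) ->
  (forall n, g n <> RtoC 1) -> (forall n z, z <> RtoC 0 -> psi (g n * z)%C = (s n * psi z)%C) ->
  filterlim g eventually (locally (RtoC 1)) ->
  exists c, forall w, psi (cexp w) = (psi (RtoC 1) * cexp (c * w))%C.
Proof.
  intros Hpsi Hpsi0 Hg1 Hs Hlim.
  destruct (Hpsi _ C1_nz) as [l1 Hl1]. apply is_Cderive_of_C_NormedModule in Hl1.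
  set (c := (1 * l1 / psi (RtoC 1))%C).
  assert (Hlog : forall z l, z <> RtoC 0 -> is_Cderive psi z l -> (z * l)%C = (c * psi z)%C).
  { intros z l Hz Hl.
    assert (E : (z * l / psi z)%C = c).
    { apply (Cseq_limit_unique (fun n => (s n - 1) / (g n - 1))%C);
        apply log_derivative_limit; auto using C1_nz; intros n; rewrite Hs; auto using C1_nz. }
    rewrite <- E. field. auto. }
  exists c. rewrite <- cexp_0.
  apply (exp_form_of_const (fun w => psi (cexp w))).
  apply (is_Cderive_0_const (fun w => psi (cexp w) * cexp (- (c * w)))%C). intros w.
  destruct (Hpsi (cexp w) (cexp_neq_0 w)) as [l Hl]. apply is_Cderive_of_C_NormedModule in Hl.
  pose proof (is_Cderive_mul_cexp _ c w _
    (is_Cderive_comp psi cexp w _ _ Hl (is_Cderive_cexp w))) as D.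
  cbv beta in D. rewrite (Hlog _ _ (cexp_neq_0 w) Hl) in D.
  replace ((c * psi (cexp w) - c * psi (cexp w)) * cexp (- (c * w)))%C with (RtoC 0) in D by ring.
  exact D.
Qed.

Lemma exp_form_of_modulus_ne_1 (psi : C -> C) (q s : C) :
  holomorphic_Cstar psi -> q <> RtoC 0 -> Cmod q <> 1 -> s <> RtoC 0 ->
  (forall z, z <> RtoC 0 -> psi (q * z)%C = (s * psi z)%C) ->
  exists c, forall w, psi (cexp w) = (psi (RtoC 1) * cexp (c * w))%C.
Proof.
  intros Hpsi Hq0 Hq1 Hs0 Hs.
  destruct (cexp_surj q Hq0) as [L HL].
  assert (HLr : fst L <> 0).
  { intros E. apply Hq1. rewrite <- HL, Cmod_cexp, E. apply exp_0. }
  assert (Hsm : 0 < Cmod s) by (apply Cmod_gt_0; exact Hs0).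
  set (al := ln (Cmod s) / fst L).
  set (Phi := fun w => (psi (cexp w) * cexp (- (RtoC al * w)))%C).
  assert (HPhi : entire Phi).
  { intros w. destruct (entire_comp_cexp psi Hpsi w) as [dF HdF].
    eexists. exact (is_Cderive_mul_cexp _ _ w _ HdF). }
  assert (Hmod : forall w, Cmod (Phi w) = Cmod (psi (cexp w)) * exp (- (al * fst w))).
  { intros w. unfold Phi. rewrite Cmod_mult, Cmod_cexp. do 2 f_equal. simpl. ring. }
  destruct (bounded_of_periodic_modulus Phi two_pi_i L) as [B HB].
  - apply entire_Ccontinuous, HPhi.
  - unfold two_pi_i; simpl. pose proof PI_RGT_0. intros E. apply HLr. nra.
  - intros w. rewrite !Hmod, cexp_periodic. do 3 f_equal. simpl. ring.
  - intros w. rewrite !Hmod, cexp_add, HL, Cmult_comm, Hs, Cmod_mult by apply cexp_neq_0.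
    replace (- (al * fst (w + L)%C)) with (- (al * fst w) + - ln (Cmod s))
      by (simpl; unfold al; field; exact HLr).
    rewrite exp_plus, !exp_Ropp, exp_ln by exact Hsm. field.
    split; [apply Rgt_not_eq, exp_pos | lra].
  - exists (RtoC al). rewrite <- cexp_0.
    apply (exp_form_of_const (fun w => psi (cexp w))). exact (liouville Phi B HPhi HB).
Qed.

Lemma Czpow_1 (n : Z) : Czpow (RtoC 1) n = RtoC 1.
Proof.
  rewrite <- cexp_0, <- cexp_Z. f_equal. ring.
Qed.

Lemma power_form_of_exp_form (psi : C -> C) (a c : C) : a <> RtoC 0 ->
  (forall w, psi (cexp w) = (a * cexp (c * w))%C) ->
  exists n : Z, forall z, z <> RtoC 0 -> psi z = (a * Czpow z n)%C.
Proof.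
  intros Ha Hpsi.
  assert (H1 : cexp (c * two_pi_i) = RtoC 1).
  { assert (E : (a * cexp (c * two_pi_i))%C = (a * cexp (c * RtoC 0))%C).
    { rewrite <- !Hpsi, <- (Cplus_0_l two_pi_i), cexp_periodic. reflexivity. }
    replace (c * RtoC 0)%C with (RtoC 0) in E by ring. rewrite cexp_0, Cmult_1_r in E.
    replace (cexp (c * two_pi_i)) with (/ a * (a * cexp (c * two_pi_i)))%C by (field; exact Ha).
    rewrite E. field. exact Ha. }
  destruct (cexp_eq_1_int c H1) as [n ->]. exists n.
  intros z Hz. destruct (cexp_surj z Hz) as [w <-]. rewrite Hpsi, cexp_Z. reflexivity.
Qed.

Theorem mainTheorem7 (G : C -> Prop) (psi sigma : C -> C)
  (hG : is_subgroup_Cstar G) (hacc : accumulation_property G)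
  (hpsi : holomorphic_Cstar psi) (hpsi0 : forall z : C, z <> 0%C -> psi z <> 0%C)
  (hsig : group_hom_on G sigma)
  (heq : forall (g z : C), G g -> z <> 0%C -> psi (g * z)%C = (sigma g * psi z)%C) :
  exists (a : C) (n : Z), a <> 0%C /\
    (forall z : C, z <> 0%C -> psi z = (a * Czpow z n)%C) /\
    (forall g, G g -> sigma g = Czpow g n).
Proof.
  destruct hG as [HG0 _]. destruct hsig as [HGsig _].
  pose proof (hpsi0 _ C1_nz) as Hpsi1.
  assert (Hexp : exists c, forall w, psi (cexp w) = (psi (RtoC 1) * cexp (c * w))%C).
  { destruct hacc as [[q [Gq Hq]] | [g [Hg Hlim]]].
    - exact (exp_form_of_modulus_ne_1 psi q (sigma q) hpsi (HG0 q Gq) Hq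
               (HG0 _ (HGsig q Gq)) (fun z => heq q z Gq)).
    - apply (exp_form_of_seq psi g (fun n => sigma (g n)) hpsi hpsi0); [| | exact Hlim].
      + intros n. apply Hg.
      + intros n z. apply heq, Hg. }
  destruct Hexp as [c Hc].
  destruct (power_form_of_exp_form psi (psi (RtoC 1)) c Hpsi1 Hc) as [n Hn].
  exists (psi (RtoC 1)), n. split; [exact Hpsi1 | split; [exact Hn |]].
  intros g Gg. pose proof (heq g (RtoC 1) Gg C1_nz) as E.
  rewrite Cmult_1_r, (Hn g (HG0 g Gg)), (Hn _ C1_nz), Czpow_1 in E.
  replace (sigma g) with (/ psi (RtoC 1) * (sigma g * (psi (RtoC 1) * RtoC 1)))%C
    by (field; exact Hpsi1).
  rewrite <- E. field. exact Hpsi1.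
Qed.
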